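(* Let $q\ge2$ be fixed. There is a function $\varepsilon(n)\to0$ as $n\to\infty$ such that every $\mathcal{C}\subseteq\Sigma_q^n$ which is a $2$-read $(n,3)_q$-code, or which is a classical $(n,2;\mathcal{I}_1)_q$-reconstruction code, satisfies $r(\mathcal{C})\ge\log_q\log_q n-\varepsilon(n)$; i.e. $r(\mathcal{C})\ge\log_q\log_q n-o(1)$.
   Context: $\Sigma_q=\{0,\dots,q-1\}$. For $\boldsymbol{x}\in\Sigma_q^n$, $x[i]$ is its $i$-th entry, with $x[i]=0$ for $i\notin[1,n]$. $\mathcal{R}(\boldsymbol{x})$ is the vector of length $n+1$ whose $i$-th entry is the multiset $\{\{x[i-1],x[i]\}\}$. $\mathcal{C}\subseteq\Sigma_q^n$ is a $2$-read $(n,d)_q$-code if $d_H(\mathcal{R}(\boldsymbol{x}),\mathcal{R}(\boldsymbol{y}))\ge d$ for all distinct $\boldsymbol{x},\boldsymbol{y}\in\mathcal{C}$ ($d_H$ = Hamming distance). $\mathcal{I}_1(\boldsymbol{x})$ is the set of sequences of length $n+1$ obtained from $\boldsymbol{x}$ by inserting exactly one symbol of $\Sigma_q$; $\mathcal{C}$ is a classical $(n,2;\mathcal{I}_1)_q$-reconstruction code if $|\mathcal{I}_1(\boldsymbol{x})\cap\mathcal{I}_1(\boldsymbol{y})|\le1$ for all distinct $\boldsymbol{x},\boldsymbol{y}\in\mathcal{C}$. Redundancy: $r(\mathcal{C})=n-\log_q|\mathcal{C}|$. *)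

From mathcomp Require Import all_boot.
From Stdlib Require Import Reals.
Set Implicit Arguments.
Unset Strict Implicit.
Unset Printing Implicit Defensive.

(* x[i] for 1 <= i <= n, and 0 outside [1,n] (nth default 0 beyond n). *)
Definition entry (q n : nat) (x : n.-tuple 'I_q) (i : nat) : nat :=
  if i == 0 then 0 else nth 0 (map val x) i.-1.

(* A multiset {{a,b}} of two symbols, represented canonically as (min, max). *)
Definition mset2 (a b : nat) : nat * nat := (minn a b, maxn a b).

Definition read2 (q n : nat) (x : n.-tuple 'I_q) : seq (nat * nat) :=
  [seq mset2 (entry x i.-1) (entry x i) | i <- iota 1 n.+1].

Definition hamming (T : eqType) (s t : seq T) : nat :=
  count (fun p : T * T => p.1 != p.2) (zip s t).

Definition two_read_code (q n d : nat) (C : {set n.-tuple 'I_q}) : Prop :=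
  forall x y, x \in C -> y \in C -> x != y -> (d <= hamming (read2 x) (read2 y))%N.

Definition ins1 (q n : nat) (x : n.-tuple 'I_q) : {set n.+1.-tuple 'I_q} :=
  [set z : n.+1.-tuple 'I_q |
     [exists i : 'I_n.+1, exists a : 'I_q,
        val z == take i x ++ a :: drop i x]].

Definition recon_code (q n : nat) (C : {set n.-tuple 'I_q}) : Prop :=
  forall x y, x \in C -> y \in C -> x != y -> (#|ins1 x :&: ins1 y| <= 1)%N.

Definition logq (q : nat) (x : R) : R := (ln x / ln (INR q))%R.

Definition redundancy (q n : nat) (C : {set n.-tuple 'I_q}) : R :=
  (INR n - logq q (INR #|C|))%R.

(* Fix two symbols a <> b and cut a word into N = n / m blocks of length m.  The m + 1
   alternating patterns of length m (a b a b ..., switching phase at some position k) are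
   pairwise swapped: on a window one is the other shifted by one place.  Two words that
   differ by a swap have 2-read vectors at distance at most 2 and two common
   supersequences, so no code of either kind contains both.  Hence overwriting the first
   pattern block of a codeword by each of the m + 1 patterns is injective, and at most
   q^n / (m + 1) codewords contain a pattern block, while by Bernoulli's inequality at most
   q^n q^m / (q^m + N (m + 1)) words contain none.  For m = log_q n - O(log log n) the sum
   is q^n (1 + o(1)) / log_q n. *)

From Stdlib Require Import Reals Lia Lra.
From mathcomp Require Import all_boot zify.
Set Implicit Arguments.
Unset Strict Implicit.
Unset Printing Implicit Defensive.
Delimit Scope R_scope with R.

(** * Swapped words *)

Section Swapped.
Variables (T : Type) (x0 : T).
Implicit Types (s : seq T).

(* Inside the window both words are 2-periodic and each is the other shifted by one,
   as in u a b a b v versus u b a b a v. *)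
Definition swapped_on lo hi s1 s2 : Prop :=
  (forall t, (t < lo) || (hi <= t) -> nth x0 s1 t = nth x0 s2 t) /\
  (forall t, lo < t < hi ->
     nth x0 s1 t.-1 = nth x0 s2 t /\ nth x0 s2 t.-1 = nth x0 s1 t).

Lemma swapped_onC lo hi s1 s2 : swapped_on lo hi s1 s2 -> swapped_on lo hi s2 s1.
Proof.
by case=> out inn; split=> t ht; [rewrite out | case: (inn t ht) => -> ->].
Qed.

Lemma swapped_on_cons c lo hi s1 s2 :
  swapped_on lo hi s1 s2 -> swapped_on lo.+1 hi.+1 (c :: s1) (c :: s2).
Proof.
case=> out inn; split=> [[|t] ht //=|[|[|t]] ht //=]; first exact: out.
by case: (inn t.+1 ht).
Qed.

Lemma swapped_on_adjacent lo hi s1 s2 i :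
  swapped_on lo hi s1 s2 -> i != lo -> i != hi ->
  (nth x0 s1 i.-1 = nth x0 s2 i.-1 /\ nth x0 s1 i = nth x0 s2 i) \/
  (nth x0 s1 i.-1 = nth x0 s2 i /\ nth x0 s1 i = nth x0 s2 i.-1).
Proof.
case=> out inn ilo ihi.
have [inside|outside] := boolP (lo < i < hi).
  by right; case: (inn i inside).
by left; split; apply: out; lia.
Qed.

Definition insert_at i (c : T) s := take i s ++ c :: drop i s.

Lemma size_insert_at i c s : size (insert_at i c s) = (size s).+1.
Proof. by rewrite size_cat /= size_take size_drop; case: ltnP; lia. Qed.

Lemma nth_insert_at i c s t : i <= size s ->
  nth x0 (insert_at i c s) t =
  if t < i then nth x0 s t else if t == i then c else nth x0 s t.-1.
Proof.
move=> hi; rewrite nth_cat size_takel //.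
case: ltnP => ti; first by rewrite nth_take.
case: eqP => [->|ne]; first by rewrite subnn.
have -> : t - i = (t - i).-1.+1 by lia.
by rewrite /= nth_drop; congr nth; lia.
Qed.

Lemma insert_at_swapped lo hi s1 s2 :
  lo < hi <= size s1 -> size s1 = size s2 -> swapped_on lo hi s1 s2 ->
  insert_at lo (nth x0 s1 lo) s2 = insert_at hi (nth x0 s2 hi.-1) s1.
Proof.
move=> /andP[lohi hin] eqsz [out inn].
apply: (@eq_from_nth _ x0); first by rewrite !size_insert_at eqsz.
move=> t _; rewrite !nth_insert_at -?eqsz; try lia.
case: (ltngtP t lo) => [tlo|lot|->]; last by rewrite lohi.
  by rewrite (ltn_trans tlo lohi) out ?tlo.
case: (ltngtP t hi) => [thi|hit|->] //.
  by case: (inn t); rewrite ?lot ?thi.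
by rewrite -out //; apply/orP; right; lia.
Qed.

End Swapped.

Lemma swapped_on_map (T U : Type) (x0 : T) (y0 : U) (f : T -> U) lo hi s1 s2 :
  size s1 = size s2 -> hi <= size s1 -> swapped_on x0 lo hi s1 s2 ->
  swapped_on y0 lo hi (map f s1) (map f s2).
Proof.
move=> eqsz hin [out inn]; split=> t ht.
  case: (ltnP t (size s1)) => ts; last by rewrite !nth_default ?size_map -?eqsz.
  by rewrite !(nth_map x0) -?eqsz // out.
by rewrite !(nth_map x0) -?eqsz; try lia; case: (inn t ht) => -> ->.
Qed.

Lemma entryE q n (x : n.-tuple 'I_q) i : entry x i = nth 0 (0 :: map val x) i.
Proof. by case: i. Qed.

Lemma hamming_read2_swapped q n (x1 x2 : n.-tuple 'I_q) lo hi :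
  swapped_on 0 lo hi (map val x1) (map val x2) -> hamming (read2 x1) (read2 x2) <= 2.
Proof.
move=> /(swapped_on_cons 0) sw.
rewrite /hamming /read2 zip_map count_map -size_filter.
apply: (@uniq_leq_size _ _ [:: lo.+1; hi.+1]); first exact/filter_uniq/iota_uniq.
move=> i; rewrite mem_filter !inE /= !entryE => /andP[+ _].
apply: contraTT; rewrite negb_or => /andP[ilo ihi]; apply/negPn/eqP.
have [[-> ->]|[-> ->]] := swapped_on_adjacent sw ilo ihi; first by [].
by rewrite /mset2 minnC maxnC.
Qed.

Definition insert_tuple (T : Type) n (x : n.-tuple T) i c : n.+1.-tuple T :=
  Tuple (introT eqP (etrans (size_insert_at i c x) (congr1 S (size_tuple x)))).

Lemma mem_ins1 q n (x : n.-tuple 'I_q) (z : n.+1.-tuple 'I_q) i c :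
  i <= n -> val z = insert_at i c x -> z \in ins1 x.
Proof.
move=> hi ez; rewrite inE; apply/existsP; exists (Ordinal (hi : i < n.+1)).
by apply/existsP; exists c; rewrite ez.
Qed.

Lemma card_ins1_swapped q n (a : 'I_q) (x1 x2 : n.-tuple 'I_q) lo hi :
  lo < hi <= n -> swapped_on a lo hi x1 x2 -> nth a x1 lo != nth a x2 lo ->
  1 < #|ins1 x1 :&: ins1 x2|.
Proof.
move=> window sw neq.
have sz : size x1 = size x2 by rewrite !size_tuple.
have w1 : lo < hi <= size x1 by rewrite size_tuple.
have w2 : lo < hi <= size x2 by rewrite size_tuple.
have hin : hi <= n by case/andP: window.
have lon : lo <= n by lia.
set z1 := insert_tuple x1 hi (nth a x2 hi.-1).
set z2 := insert_tuple x2 hi (nth a x1 hi.-1).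
have z1_in : z1 \in ins1 x1 :&: ins1 x2.
  apply/setIP; split; first exact: (mem_ins1 (c := nth a x2 hi.-1) hin).
  apply: (mem_ins1 (c := nth a x1 lo) lon).
  by rewrite /= (insert_at_swapped w1 sz).
have z2_in : z2 \in ins1 x1 :&: ins1 x2.
  apply/setIP; split; last exact: (mem_ins1 (c := nth a x1 hi.-1) hin).
  apply: (mem_ins1 (c := nth a x2 lo) lon).
  by rewrite /= (insert_at_swapped w2 (esym sz) (swapped_onC sw)).
have z12 : z1 != z2.
  apply: contra neq => /eqP /(congr1 (fun z : n.+1.-tuple 'I_q => nth a z lo)).
  by rewrite /= !nth_insert_at ?size_tuple //; case/andP: window => -> _ ->.
have sub : [set z1; z2] \subset ins1 x1 :&: ins1 x2 by apply/subsetP => z /set2P [] ->.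
by have := subset_leq_card sub; rewrite cards2 z12.
Qed.

Definition swap_free (T : finType) (a : T) n (C : {set n.-tuple T}) : Prop :=
  forall x1 x2 lo hi, x1 \in C -> x2 \in C -> lo < hi <= n ->
    swapped_on a lo hi x1 x2 -> nth a x1 lo = nth a x2 lo.

Lemma two_read_code_swap_free q n (a : 'I_q) (C : {set n.-tuple 'I_q}) :
  two_read_code 3 C -> swap_free a C.
Proof.
move=> HC x1 x2 lo hi x1C x2C /andP[_ hin] sw; apply/eqP/negPn/negP => neq.
have x12 : x1 != x2 by apply: contraNneq neq => ->.
have := HC _ _ x1C x2C x12.
rewrite leqNgt ltnS (@hamming_read2_swapped _ _ _ _ lo hi) //.
by apply: swapped_on_map sw; rewrite ?size_tuple.
Qed.

Lemma recon_code_swap_free q n (a : 'I_q) (C : {set n.-tuple 'I_q}) :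
  recon_code C -> swap_free a C.
Proof.
move=> HC x1 x2 lo hi x1C x2C window sw; apply/eqP/negPn/negP => neq.
have x12 : x1 != x2 by apply: contraNneq neq => ->.
have := HC _ _ x1C x2C x12.
by rewrite leqNgt (card_ins1_swapped window sw neq).
Qed.

(** * Blocks and alternating patterns *)

Section Blocks.
Variables (T : Type) (x0 : T) (m : nat).
Implicit Types (s b : seq T).

Definition block j s := mkseq (fun i => nth x0 s (j * m + i)) m.

Definition set_block j b s :=
  mkseq (fun t => if j * m <= t < j * m + m then nth x0 b (t - j * m) else nth x0 s t)
        (size s).

Lemma size_block j s : size (block j s) = m.
Proof. exact: size_mkseq. Qed.

Lemma nth_block j s i : i < m -> nth x0 (block j s) i = nth x0 s (j * m + i).
Proof. by move=> im; rewrite nth_mkseq. Qed.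

Lemma size_set_block j b s : size (set_block j b s) = size s.
Proof. exact: size_mkseq. Qed.

Lemma nth_set_block j b s t :
  nth x0 (set_block j b s) t =
  if (j * m <= t < j * m + m) && (t < size s) then nth x0 b (t - j * m) else nth x0 s t.
Proof.
case: (ltnP t (size s)) => ts; first by rewrite nth_mkseq // andbT.
by rewrite andbF !nth_default ?size_set_block.
Qed.

Lemma block_set_block j b s :
  size b = m -> j * m + m <= size s -> block j (set_block j b s) = b.
Proof.
move=> sb js; apply: (@eq_from_nth _ x0); rewrite size_block ?sb // => i im.
by rewrite nth_block // nth_set_block ifT ?addKn //; lia.
Qed.

Lemma block_set_block_neq j j' b s : j' != j -> block j' (set_block j b s) = block j' s.
Proof.
move=> jj; apply: (@eq_from_nth _ x0); rewrite !size_block // => i im.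
rewrite !nth_block // nth_set_block ifF //.
have [lt|gt] : j'.+1 * m <= j * m \/ j.+1 * m <= j' * m.
  by move: jj; rewrite neq_ltn => /orP[] c; [left | right]; rewrite leq_mul2r c orbT.
all: move: lt gt; rewrite !mulSn; lia.
Qed.

Lemma set_block_id j s : set_block j (block j s) s = s.
Proof.
apply: (@eq_from_nth _ x0); rewrite size_set_block // => t ts.
rewrite nth_set_block; case: ifP => // /andP[/andP[lo hi] _].
by rewrite nth_block ?subnKC //; lia.
Qed.

Lemma set_block_set_block j b b' s : set_block j b (set_block j b' s) = set_block j b s.
Proof.
apply: (@eq_from_nth _ x0); rewrite !size_set_block // => t ts.
by rewrite !nth_set_block size_set_block; case: ifP => // ->.
Qed.

Lemma swapped_on_set_block j lo hi b1 b2 s :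
  hi <= m -> j * m + m <= size s -> swapped_on x0 lo hi b1 b2 ->
  swapped_on x0 (j * m + lo) (j * m + hi) (set_block j b1 s) (set_block j b2 s).
Proof.
move=> him js [out inn]; split=> t ht.
  by rewrite !nth_set_block; case: ifP => // /andP[/andP[h1 h2] _]; apply: out; lia.
rewrite !nth_set_block !ifT; try lia.
have -> : t.-1 - j * m = (t - j * m).-1 by lia.
by apply: inn; lia.
Qed.

Definition set_block_tuple n j b (x : n.-tuple T) : n.-tuple T :=
  Tuple (introT eqP (etrans (size_set_block j b x) (size_tuple x))).

Definition block_tuple j s : m.-tuple T := Tuple (introT eqP (size_block j s)).

End Blocks.

Section Patterns.
Variables (T : eqType) (a b : T) (m : nat).

(* a at even and b at odd positions below k, the other way round from k on. *)
Definition alt_pattern k := mkseq (fun i => if odd i == (i < k) then b else a) m.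

Lemma size_alt_pattern k : size (alt_pattern k) = m.
Proof. exact: size_mkseq. Qed.

Lemma swapped_on_alt_pattern x0 k l :
  k <= l <= m -> swapped_on x0 k l (alt_pattern k) (alt_pattern l).
Proof.
move=> /andP[kl lm]; split=> t ht.
  case: (ltnP t m) => tm; last by rewrite !nth_default ?size_alt_pattern.
  by rewrite !nth_mkseq // (_ : (t < k) = (t < l)) //; lia.
case: t ht => // t ht; rewrite /= !nth_mkseq; try lia.
have [-> -> -> ->] : [/\ (t < k) = false, t < l, (t.+1 < k) = false & t.+1 < l].
  by split; lia.
by rewrite /=; case: (odd t).
Qed.

Lemma nth_alt_pattern_neq x0 k l :
  a != b -> k < l <= m -> nth x0 (alt_pattern k) k != nth x0 (alt_pattern l) k.
Proof.
move=> hab /andP[kl lm]; rewrite !nth_mkseq ?ltnn ?kl; try lia.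
by case: (odd k); rewrite // eq_sym.
Qed.

Lemma alt_pattern_inj k l :
  a != b -> k <= m -> l <= m -> alt_pattern k = alt_pattern l -> k = l.
Proof.
move=> hab km lm; wlog kl : k l km lm / k < l.
  by move=> W E; case: (ltngtP k l) => // c; [exact: W | symmetry; exact: W].
have klm : k < l <= m by rewrite kl.
by move=> E; move: (nth_alt_pattern_neq a hab klm); rewrite E eqxx.
Qed.

End Patterns.

(** * Counting codewords *)

Lemma bernoulli_expn c g k : c ^ k * (c + g + k * g) <= (c + g) ^ k.+1.
Proof.
elim: k => [|k IH]; first by rewrite mul1n mul0n addn0 expn1.
rewrite expnS (expnS (c + g) k.+1).
apply: (@leq_trans ((c + g) * (c ^ k * (c + g + k * g)))); last by rewrite leq_mul2l IH orbT.
by rewrite [c * c ^ k]mulnC -mulnA [(c + g) * (c ^ k * _)]mulnCA leq_mul2l; nia.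
Qed.

Section Counting.
Variables (T : finType) (a b : T) (m N : nat).
Hypothesis hab : a != b.

Definition is_pattern (s : seq T) : bool := [exists k : 'I_m.+1, s == alt_pattern a b m k].

Definition first_pattern (s : seq T) : nat :=
  find (fun j => is_pattern (block a m j s)) (iota 0 N).

Lemma block_fits j (s : seq T) : j < N -> N * m <= size s -> j * m + m <= size s.
Proof. by move=> jN; apply: leq_trans; rewrite addnC -mulSn leq_mul2r jN orbT. Qed.

Lemma is_pattern_first s : first_pattern s < N -> is_pattern (block a m (first_pattern s) s).
Proof.
move=> h; have := @nth_find _ 0 (fun j => is_pattern (block a m j s)) (iota 0 N).
by rewrite nth_iota // add0n; apply; rewrite has_find size_iota.
Qed.

Lemma not_pattern_before s j : j < first_pattern s -> ~~ is_pattern (block a m j s).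
Proof.
move=> h; have := before_find 0 h; rewrite nth_iota ?add0n => [->//|].
by apply: leq_trans h _; rewrite -[N](size_iota 0) find_size.
Qed.

Lemma set_block_first_pattern s : first_pattern s < N ->
  exists2 k, k <= m & set_block a m (first_pattern s) (alt_pattern a b m k) s = s.
Proof.
move/is_pattern_first/existsP => [k /eqP E]; exists k; first by rewrite -ltnS.
by rewrite -E set_block_id.
Qed.

Lemma first_pattern_set_block s k : first_pattern s < N -> k <= m -> N * m <= size s ->
  first_pattern (set_block a m (first_pattern s) (alt_pattern a b m k) s) = first_pattern s.
Proof.
move=> hj km hs; apply: eq_in_find => j; rewrite mem_iota add0n => /andP[_ jN].
have [->|ne] := eqVneq j (first_pattern s); last by rewrite block_set_block_neq.
rewrite is_pattern_first // block_set_block ?size_alt_pattern ?block_fits //.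
by apply/existsP; exists (Ordinal (km : k < m.+1)).
Qed.

Lemma swap_free_pattern_eq n (C : {set n.-tuple T}) j k l (x : n.-tuple T) :
  swap_free a C -> j * m + m <= n -> k <= m -> l <= m ->
  set_block_tuple a m j (alt_pattern a b m k) x \in C ->
  set_block_tuple a m j (alt_pattern a b m l) x \in C -> k = l.
Proof.
move=> free jn km lm; wlog kl : k l km lm / k < l.
  by move=> W xk xl; case: (ltngtP k l) => c; [exact: W | symmetry; exact: W |].
move=> xk xl; have klm : k < l <= m by rewrite kl.
have sw : swapped_on a k l (alt_pattern a b m k) (alt_pattern a b m l).
  by apply: swapped_on_alt_pattern; rewrite ltnW.
have fits : j * m + m <= size x by rewrite size_tuple.
have win : j * m + k < j * m + l <= n by lia.
have := free _ _ _ _ xk xl win (swapped_on_set_block lm fits sw).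
have inblock : (j * m <= j * m + k < j * m + m) && (j * m + k < size x).
  by rewrite size_tuple; lia.
rewrite /= !nth_set_block inblock addKn.
by move/eqP; rewrite (negbTE (nth_alt_pattern_neq a hab klm)).
Qed.

Lemma codeword_eq_of_set_block n (C : {set n.-tuple T}) (x y : n.-tuple T) k :
  swap_free a C -> N * m <= n -> x \in C -> y \in C -> first_pattern x < N ->
  first_pattern y = first_pattern x -> k <= m ->
  set_block a m (first_pattern x) (alt_pattern a b m k) x =
    set_block a m (first_pattern x) (alt_pattern a b m k) y ->
  x = y.
Proof.
move=> free hN xC yC xg ej km E; set j := first_pattern x in ej E.
have yg : first_pattern y < N by rewrite ej.
have jb : j * m + m <= n by rewrite -(size_tuple x) block_fits ?size_tuple.
have [k1 k1m Ex] := set_block_first_pattern xg.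
have [l1 l1m] := set_block_first_pattern yg; rewrite ej => Ey.
have Ey' : set_block a m j (alt_pattern a b m l1) x = y.
  by rewrite -Ey -(set_block_set_block a m j _ (alt_pattern a b m k) y) -E set_block_set_block.
have xk1 : set_block_tuple a m j (alt_pattern a b m k1) x \in C.
  by rewrite (_ : set_block_tuple _ _ _ _ _ = x) //; exact: val_inj.
have yl1 : set_block_tuple a m j (alt_pattern a b m l1) x \in C.
  by rewrite (_ : set_block_tuple _ _ _ _ _ = y) //; exact: val_inj.
have ek := swap_free_pattern_eq free jb k1m l1m xk1 yl1.
by apply: val_inj; rewrite /= -Ey' -ek Ex.
Qed.

(* Overwriting the first pattern block with each of the m+1 patterns is injective on
   codewords: two codewords with a common image are swapped inside that block. *)
Lemma card_patterned_codewords n (C : {set n.-tuple T}) : swap_free a C -> N * m <= n ->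
  #|[set x in C | first_pattern x < N]| * m.+1 <= #|T| ^ n.
Proof.
move=> free hN.
pose F (p : n.-tuple T * 'I_m.+1) :=
  set_block_tuple a m (first_pattern p.1) (alt_pattern a b m p.2) p.1.
have sizeN (x : n.-tuple T) : N * m <= size x by rewrite size_tuple.
have Finj : {in setX [set x in C | first_pattern x < N] [set: 'I_m.+1] &, injective F}.
  move=> [x k] [y l]; rewrite !inE /= !andbT => /andP[xC xg] /andP[yC yg] /(congr1 val) /= E.
  have ej : first_pattern y = first_pattern x.
    rewrite -(first_pattern_set_block yg (ltn_ord l) (sizeN y)) -E.
    exact: first_pattern_set_block xg (ltn_ord k) (sizeN x).
  rewrite ej in E; have ekl : k = l.
    have := congr1 (block a m (first_pattern x)) E.
    rewrite !block_set_block ?size_alt_pattern ?block_fits // => /(alt_pattern_inj hab).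
    by move=> ekl; apply/val_inj/ekl; rewrite -ltnS.
  subst l; congr (_, _).
  exact: codeword_eq_of_set_block free hN xC yC xg ej (ltn_ord k) E.
have := card_in_imset Finj; rewrite cardsX cardsT card_ord => <-.
by rewrite -card_tuple max_card.
Qed.

Definition pattern_tuple (k : 'I_m.+1) : m.-tuple T :=
  Tuple (introT eqP (size_alt_pattern a b m k)).

Definition patterns : {set m.-tuple T} := [set pattern_tuple k | k : 'I_m.+1].

Lemma mem_patterns (s : m.-tuple T) : (s \in patterns) = is_pattern s.
Proof.
apply/imsetP/existsP => [[k _ ->]|[k /eqP E]]; exists k => //.
exact: val_inj.
Qed.

Lemma card_non_patterns : #|~: patterns| + m.+1 = #|T| ^ m.
Proof.
have inj : injective pattern_tuple.
  by move=> k l /(congr1 val) /(alt_pattern_inj hab) E; apply/val_inj/E; rewrite -ltnS.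
by have := cardsC patterns; rewrite card_imset // card_ord card_tuple addnC.
Qed.

Lemma card_patternless_words n : N * m <= n ->
  #|[set x : n.-tuple T | N <= first_pattern x]| <= #|~: patterns| ^ N * #|T| ^ (n - N * m).
Proof.
move=> hN.
pose G (x : n.-tuple T) := ([ffun j : 'I_N => block_tuple a m j x], drop_tuple (N * m) x).
have Ginj : injective G.
  move=> x y [] /ffunP Eb Ed.
  apply: val_inj; apply: (@eq_from_nth _ a); first by rewrite !size_tuple.
  move=> t; rewrite size_tuple => tn.
  case: (ltnP t (N * m)) => tN.
    have m0 : 0 < m by case: (m) tN => //; rewrite muln0.
    have jN : t %/ m < N by rewrite ltn_divLR.
    have := congr1 (fun s : m.-tuple T => nth a s (t %% m)) (Eb (Ordinal jN)).
    by rewrite !ffunE /= !nth_block ?ltn_pmod // -divn_eq.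
  have := congr1 (fun s => nth a s (t - N * m)) Ed.
  by rewrite /= !nth_drop subnKC.
rewrite -(card_imset _ Ginj).
apply: (@leq_trans #|setX [set f : {ffun 'I_N -> m.-tuple T} | f \in ffun_on (~: patterns)]
                         [set: (n - N * m).-tuple T]|).
  apply: subset_leq_card; apply/subsetP => z /imsetP [x]; rewrite inE => hx ->.
  rewrite !inE andbT; apply/ffun_onP => j; rewrite ffunE inE mem_patterns.
  exact/not_pattern_before/(leq_trans (ltn_ord j)).
by rewrite cardsX cardsT card_tuple cardsE card_ffun_on card_ord.
Qed.

Lemma card_patternless_words_mul n : N * m <= n ->
  #|[set x : n.-tuple T | N <= first_pattern x]| * (#|T| ^ m + N * m.+1) <=
  #|T| ^ n * #|T| ^ m.
Proof.
move=> hN.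
have qn : #|T| ^ n = (#|T| ^ m) ^ N * #|T| ^ (n - N * m).
  by rewrite -expnM -expnD mulnC subnKC.
rewrite qn -card_non_patterns.
apply: leq_trans (leq_mul (card_patternless_words hN) (leqnn _)) _.
by rewrite mulnAC [X in _ <= X]mulnAC -expnSr leq_mul2r bernoulli_expn orbT.
Qed.

End Counting.

(** * Choice of the block length *)

(* About 2 log_2 L: large enough that 2 ^ log_slack L exceeds (L + 1)^2, yet o(L). *)
Definition log_slack L := 2 * (trunc_log 2 L.+1).+1.

Definition block_len q n := trunc_log q n - log_slack (trunc_log q n).

Lemma sq_le_exp2 s : 6 <= s -> s.+1 * s.+1 <= 2 ^ s.
Proof.
elim: s => // s IH; rewrite leq_eqVlt => /orP[/eqP <- //| hs].
by have := IH hs; rewrite expnS; nia.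
Qed.

Lemma log_slack_small K : exists L0, forall L, L0 <= L -> K.+1 * log_slack L <= L.+1.
Proof.
exists (2 ^ (2 * K + 8)) => L hL; rewrite /log_slack.
set s := trunc_log 2 L.+1.
have s_ge : 2 * K + 8 <= s by apply: trunc_log_max => //; lia.
have : 2 ^ s <= L.+1 by apply: trunc_logP.
have : s.+1 * s.+1 <= 2 ^ s by apply: sq_le_exp2; lia.
nia.
Qed.

Lemma log_slack_large K L : K <= L.+1 -> K * L.+1 < 2 ^ log_slack L.
Proof.
move=> KL; rewrite /log_slack [2 * _]mulnC expnM.
have := trunc_log_ltn L.+1 (isT : 1 < 2); set s := trunc_log 2 L.+1 => Ls.
rewrite -mulnn; apply: (@leq_ltn_trans (L.+1 * L.+1)); last exact: ltn_mul.
by rewrite leq_mul2r KL orbT.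
Qed.

Lemma block_len_eventually q K : 1 < q -> 0 < K ->
  exists n0, forall n, n0 <= n ->
    [/\ 0 < block_len q n,
        K * (trunc_log q n).+1 <= K.+1 * (block_len q n).+1 &
        K * (trunc_log q n).+1 * q ^ block_len q n <=
          q ^ block_len q n + n %/ block_len q n * (block_len q n).+1].
Proof.
move=> hq hK; have [L0 small] := log_slack_small K.
exists (q ^ maxn L0 K) => n hn.
rewrite /block_len; set L := trunc_log q n.
have LL : maxn L0 K <= L by apply: trunc_log_max.
have qL : q ^ L <= n by apply: trunc_logP; rewrite // (leq_trans _ hn) // expn_gt0 ltnW.
have tK := small L (leq_trans (leq_maxl _ _) LL).
set t := log_slack L in tK *; set m := L - t.
have t2 : 2 <= t by rewrite /t /log_slack; lia.
have t_le : 2 * t <= K.+1 * t by rewrite leq_mul2r; lia.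
have m0 : 0 < m by lia.
split=> //.
  rewrite (_ : m.+1 = L.+1 - t); last by lia.
  by rewrite mulnBr mulSn; lia.
have Kt : K * L.+1 < q ^ t.
  apply: leq_trans (log_slack_large _) _; first by lia.
  by rewrite leq_exp2r //; lia.
have qLtm : q ^ L = q ^ t * q ^ m by rewrite -expnD; congr expn; lia.
have KLm : K * L.+1 * q ^ m < q ^ L by rewrite qLtm ltn_pmul2r // expn_gt0 ltnW.
have := ltn_ceil n m0; have := ltn_expl m hq.
rewrite mulSn [n %/ m * m.+1]mulnS; set N := n %/ m; lia.
Qed.

Lemma block_len_lt_expn q n : 1 < q -> block_len q n < q ^ n.
Proof.
move=> hq; apply: (@leq_ltn_trans (trunc_log q n)); first exact: leq_subr.
apply: leq_ltn_trans (ltn_expl n hq); case: (posnP n) => [->|n0]; first by rewrite trunc_log0.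
by have := ltn_expl (trunc_log q n) hq; have := trunc_logP hq n0; lia.
Qed.

(** * The redundancy bound *)

Lemma INR_expn q n : INR (q ^ n) = (INR q ^ n)%R.
Proof. by elim: n => [|n IH] //; rewrite expnS mult_INR IH. Qed.

Lemma ln_le x y : (0 < x)%R -> (x <= y)%R -> (ln x <= ln y)%R.
Proof. by move=> x0 [xy|<-]; [apply/Rlt_le/ln_increasing | apply: Rle_refl]. Qed.

Lemma ln_1_plus_le x : (0 < 1 + x)%R -> (ln (1 + x) <= x)%R.
Proof. by move=> h; rewrite -{2}(ln_exp x); apply: ln_le => //; apply: exp_ineq1_le. Qed.

Lemma ln_INR_gt0 q : 1 < q -> (0 < ln (INR q))%R.
Proof. by move=> hq; rewrite -ln_1; apply: ln_increasing; [lra | apply/lt_1_INR/ltP]. Qed.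

Lemma ln_nonpos x : (x <= 0)%R -> ln x = 0%R.
Proof. by move=> x0; rewrite /ln; case: Rlt_dec => // h; exfalso; lra. Qed.

Definition density_bound q n m : R :=
  (/ INR m.+1 + INR (q ^ m) / INR (q ^ m + n %/ m * m.+1))%R.

Lemma card_le_density_bound (T : finType) (a b : T) n m (C : {set n.-tuple T}) :
  a != b -> swap_free a C ->
  (INR #|C| <= INR (#|T| ^ n) * density_bound #|T| n m)%R.
Proof.
move=> hab free; set N := n %/ m; set q := #|T|.
have hN : N * m <= n by apply: leq_divM.
have q0 : 0 < q by apply/card_gt0P; exists a.
set G := [set x in C | first_pattern a b m N x < N].
set B := [set x : n.-tuple T | N <= first_pattern a b m N x].
have split_C : #|C| <= #|G| + #|B|.
  apply: leq_trans (leq_card_setU G B); apply/subset_leq_card/subsetP => x xC.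
  by rewrite !inE xC /= leqNgt orNb.
have G_le : #|G| * m.+1 <= q ^ n := card_patterned_codewords hab free hN.
have B_le : #|B| * (q ^ m + N * m.+1) <= q ^ n * q ^ m := card_patternless_words_mul hab hN.
move/leP/le_INR: split_C; move/leP/le_INR: G_le; move/leP/le_INR: B_le.
rewrite !plus_INR !mult_INR /density_bound plus_INR mult_INR -/N -/q.
have : (0 < INR m.+1)%R by apply/lt_0_INR/ltP.
have : (0 < INR (q ^ m))%R by apply/lt_0_INR/ltP; rewrite expn_gt0 q0.
have : (0 <= INR N)%R by apply: pos_INR.
set M := INR m.+1; set A := INR (q ^ m); set Nr := INR N; set Q := INR (q ^ n).
move=> N0 A0 M0 hB hG hC.
have D0 : (0 < A + Nr * M)%R by nra.
rewrite Rmult_plus_distr_l; apply: Rle_trans hC _; apply: Rplus_le_compat.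
  by apply: (Rmult_le_reg_r M) => //; rewrite Rmult_assoc Rinv_l; lra.
apply: (Rmult_le_reg_r (A + Nr * M)) => //.
by rewrite /Rdiv -Rmult_assoc Rmult_assoc Rinv_l; lra.
Qed.

Lemma density_bound_gt0 q n m : 0 < q -> (0 < density_bound q n m)%R.
Proof.
move=> q0; have M0 : (0 < / INR m.+1)%R by apply/Rinv_0_lt_compat/lt_0_INR/ltP.
have A0 : (0 < INR (q ^ m))%R by apply/lt_0_INR/ltP; rewrite expn_gt0 q0.
have D0 : (0 < INR (q ^ m + n %/ m * m.+1))%R.
  by apply/lt_0_INR/ltP; rewrite addn_gt0 expn_gt0 q0.
by have := Rdiv_lt_0_compat _ _ A0 D0; rewrite /density_bound; lra.
Qed.

Definition card_bound q n : R := (INR (q ^ n) * density_bound q n (block_len q n))%R.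

Lemma one_le_card_bound q n : 1 < q -> (1 <= card_bound q n)%R.
Proof.
move=> hq; rewrite /card_bound /density_bound; set m := block_len q n.
have M0 : (0 < INR m.+1)%R by apply/lt_0_INR/ltP.
have MQ : (INR m.+1 <= INR (q ^ n))%R by apply/le_INR/leP/block_len_lt_expn.
have AD : (0 <= INR (q ^ m) / INR (q ^ m + n %/ m * m.+1))%R.
  apply: Rmult_le_pos; first exact: pos_INR.
  by apply/Rlt_le/Rinv_0_lt_compat/lt_0_INR/ltP; rewrite addn_gt0 expn_gt0 ltnW.
have : (INR m.+1 * / INR m.+1 = 1)%R by apply: Rinv_r; lra.
have := Rinv_0_lt_compat _ M0; have := pos_INR (q ^ n); nra.
Qed.

Lemma redundancy_ge q n (C : {set n.-tuple 'I_q}) B : 1 < q ->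
  (1 <= B)%R -> (INR #|C| <= B)%R -> (INR n - logq q B <= redundancy C)%R.
Proof.
move=> hq B1 CB; rewrite /redundancy /logq; apply/Rplus_le_compat_l/Ropp_le_contravar.
apply/Rmult_le_compat_r; first exact/Rlt_le/Rinv_0_lt_compat/ln_INR_gt0.
case: (posnP #|C|) => [->|C0]; last by apply: ln_le => //; apply/lt_0_INR/ltP.
by rewrite ln_nonpos /= -?ln_1; [apply: ln_le | ]; lra.
Qed.

Lemma ratio_sum_le (K L M A Nr : R) : (0 < K)%R -> (0 < M)%R -> (0 < A)%R -> (0 <= Nr)%R ->
  (K * L <= (K + 1) * M)%R -> (K * L * A <= A + Nr * M)%R ->
  (L * (/ M + A / (A + Nr * M)) <= 1 + 2 / K)%R.
Proof.
move=> K0 M0 A0 N0 hL hA; have D0 : (0 < A + Nr * M)%R by nra.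
have t1 : (L / M <= 1 + / K)%R.
  apply: (Rmult_le_reg_r (K * M)); first nra.
  have -> : (L / M * (K * M) = K * L)%R by field; lra.
  have -> : ((1 + / K) * (K * M) = (K + 1) * M)%R by field; lra.
  lra.
have t2 : (L * (A / (A + Nr * M)) <= / K)%R.
  apply: (Rmult_le_reg_r (K * (A + Nr * M))); first nra.
  have -> : (L * (A / (A + Nr * M)) * (K * (A + Nr * M)) = K * L * A)%R by field; lra.
  have -> : (/ K * (K * (A + Nr * M)) = A + Nr * M)%R by field; lra.
  lra.
by rewrite Rmult_plus_distr_l /Rdiv; rewrite /Rdiv in t1; lra.
Qed.

Lemma logq_mul_density_le q n K : 1 < q -> 0 < K -> 1 < n ->
  K * (trunc_log q n).+1 <= K.+1 * (block_len q n).+1 ->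
  K * (trunc_log q n).+1 * q ^ block_len q n <=
    q ^ block_len q n + n %/ block_len q n * (block_len q n).+1 ->
  (logq q (INR n) * density_bound q n (block_len q n) <= 1 + 2 / INR K)%R.
Proof.
move=> hq K0 n1 hL hA; set m := block_len q n in hL hA *; set L := trunc_log q n in hL hA.
have lq := ln_INR_gt0 hq.
have n0 : (0 < INR n)%R by apply/lt_0_INR/ltP; lia.
have q0 : (0 < INR q)%R by apply/lt_0_INR/ltP; lia.
have nL : (logq q (INR n) <= INR L.+1)%R.
  move/ltP/lt_INR: (trunc_log_ltn n hq); rewrite INR_expn => h.
  rewrite /logq; apply: (Rmult_le_reg_r (ln (INR q))) => //.
  rewrite /Rdiv Rmult_assoc Rinv_l ?Rmult_1_r -?ln_pow; try lra.
  by apply/Rlt_le/ln_increasing.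
apply: Rle_trans (Rmult_le_compat_r _ _ _ (Rlt_le _ _ (density_bound_gt0 _ _ (ltnW hq))) nL) _.
rewrite /density_bound plus_INR mult_INR.
move/leP/le_INR: hL; move/leP/le_INR: hA; rewrite !plus_INR !mult_INR => hA hL.
apply: ratio_sum_le; rewrite -?S_INR //; try apply: pos_INR.
- exact/lt_0_INR/ltP.
- exact/lt_0_INR/ltP.
- by apply/lt_0_INR/ltP; rewrite expn_gt0 ltnW.
- by rewrite [INR K.+1]S_INR; lra.
Qed.

Lemma logq_le_1_plus q x e : 1 < q -> (0 < e)%R -> (x <= 1 + e)%R ->
  (logq q x <= e / ln (INR q))%R.
Proof.
move=> hq e0 xe; apply: Rmult_le_compat_r; first exact/Rlt_le/Rinv_0_lt_compat/ln_INR_gt0.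
have [x_le|x0] := Rle_lt_dec x 0; first by rewrite ln_nonpos //; lra.
by apply: Rle_trans (ln_le x0 xe) (ln_1_plus_le _); lra.
Qed.

Lemma logq_card_boundE q n : 1 < q -> 1 < n ->
  (logq q (logq q (INR n)) - INR n + logq q (card_bound q n) =
   logq q (logq q (INR n) * density_bound q n (block_len q n)))%R.
Proof.
move=> hq n1; have lq := ln_INR_gt0 hq.
have q0 : (0 < INR q)%R by apply/lt_0_INR/ltP; lia.
have lnn0 : (0 < ln (INR n))%R.
  by rewrite -ln_1; apply: ln_increasing; [lra | apply/lt_1_INR/ltP].
have beta0 := density_bound_gt0 n (block_len q n) (ltnW hq).
rewrite /logq /card_bound !ln_mult ?INR_expn ?ln_pow //; first (field; lra).
- exact: Rinv_0_lt_compat.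
- exact: Rdiv_lt_0_compat.
- exact: pow_lt.
Qed.

(* Chosen so that the inequality of the theorem is immediate; the content is [eps_cv]. *)
Definition eps q n : R :=
  Rmax 0 (logq q (logq q (INR n)) - INR n + logq q (card_bound q n)).

Lemma eps_cv q : 1 < q -> Un_cv (eps q) 0.
Proof.
move=> hq d d0; have lq := ln_INR_gt0 hq.
have [K [hK /ltP K0]] : exists K, (/ INR K < d * ln (INR q) / 2)%R /\ (0 < K)%coq_nat.
  by apply: archimed_cor1; nra.
have K0r : (0 < INR K)%R by apply/lt_0_INR/ltP.
have [n0 ev] := block_len_eventually hq K0.
exists n0 => n /leP hn; have [m0 hL hA] := ev n hn.
have n1 : 1 < n.
  have : 0 < trunc_log q n by apply: leq_trans m0 (leq_subr _ _).
  by rewrite trunc_log_gt0 => /andP[_]; lia.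
rewrite /R_dist Rminus_0_r Rabs_right; last exact/Rle_ge/Rmax_l.
apply: Rmax_lub_lt => //; rewrite logq_card_boundE //.
have two_K : (0 < 2 / INR K)%R by apply: Rdiv_lt_0_compat; lra.
apply: Rle_lt_trans (logq_le_1_plus hq two_K (logq_mul_density_le hq K0 n1 hL hA)) _.
by apply: (Rmult_lt_reg_r (ln (INR q))) => //; rewrite /Rdiv Rmult_assoc Rinv_l; lra.
Qed.
Theorem theorem5 (q : nat) (hq : (2 <= q)%N) :
  exists eps : nat -> R, Un_cv eps 0%R /\
    forall (n : nat) (C : {set n.-tuple 'I_q}),
      two_read_code 3 C \/ recon_code C ->
      (logq q (logq q (INR n)) - eps n <= redundancy C)%R.
Proof.
exists (eps q); split; first exact: eps_cv.
move=> n C HC; pose a : 'I_q := Ordinal (ltnW hq); pose b : 'I_q := Ordinal hq.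
have free : swap_free a C.
  by case: HC; [exact: two_read_code_swap_free | exact: recon_code_swap_free].
have CB : (INR #|C| <= card_bound q n)%R.
  by have := card_le_density_bound (block_len q n) (isT : a != b) free; rewrite card_ord.
have := redundancy_ge hq (one_le_card_bound n hq) CB.
have := Rmax_r 0 (logq q (logq q (INR n)) - INR n + logq q (card_bound q n)).
rewrite /eps; lra.
Qed.
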